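(* Let $v\in\mathbb R^3$ with $|v|=1$ and let $\phi,\psi,\rho>0$. Let $P=\begin{bmatrix}P_{aa}&P_{ab}\\ P_{ab}^T&P_{bb}\end{bmatrix}$ be a $6\times6$ matrix with $P_{aa}=\phi I$, $P_{ab}=-\psi I$ and $P_{bb}$ arbitrary, let $R=\rho I$, and let $H=\begin{bmatrix}[v\times] & 0\end{bmatrix}$ ($3\times6$). Then $HPH^T+R$ is invertible and the Kalman gain $K=PH^T(HPH^T+R)^{-1}$ equals $$K=\frac{1}{1+\rho/\phi}\begin{bmatrix}I\\ -(\psi/\phi)I\end{bmatrix}[v\times]^T.$$ Consequently, for every $\xi\in\mathbb R^3$, $$K(\xi-v)=\frac{1}{1+\rho/\phi}\begin{bmatrix}\xi\times v\\ -(\psi/\phi)\,(\xi\times v)\end{bmatrix},$$ i.e. the EKF update $[\delta a;\delta b]=K(\xi-v)$ coincides with the complementary-filter update $\delta a=w_a\,(\xi\times v)$, $\delta b=-w_b\,\delta a$ with $w_a=\frac{1}{1+\rho/\phi}$ and $w_b=\psi/\phi$.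
   Context: $[v\times]$ denotes the $3\times3$ skew-symmetric matrix with $[v\times]w=v\times w$. $I$ is the $3\times3$ identity. *)

From HB Require Import structures.
From mathcomp Require Import all_boot all_order all_algebra.
Set Implicit Arguments. Unset Strict Implicit. Unset Printing Implicit Defensive.
Import Order.TTheory GRing.Theory Num.Theory.
Local Open Scope ring_scope.

Definition c0 {R : pzRingType} (v : 'cV[R]_3) : R := v (inord 0) 0.
Definition c1 {R : pzRingType} (v : 'cV[R]_3) : R := v (inord 1) 0.
Definition c2 {R : pzRingType} (v : 'cV[R]_3) : R := v (inord 2) 0.

Definition crossv {R : pzRingType} (a b : 'cV[R]_3) : 'cV[R]_3 :=
  \col_(i < 3)
    (if (i : nat) == 0%N then c1 a * c2 b - c2 a * c1 b
     else if (i : nat) == 1%N then c2 a * c0 b - c0 a * c2 b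
     else c0 a * c1 b - c1 a * c0 b).

Definition crossmx {R : pzRingType} (v : 'cV[R]_3) : 'M[R]_3 :=
  \matrix_(i < 3, j < 3)
    (if (i : nat) == 0%N then
       (if (j : nat) == 0%N then 0 else if (j : nat) == 1%N then - c2 v else c1 v)
     else if (i : nat) == 1%N then
       (if (j : nat) == 0%N then c2 v else if (j : nat) == 1%N then 0 else - c0 v)
     else
       (if (j : nat) == 0%N then - c1 v else if (j : nat) == 1%N then c0 v else 0)).

Definition sqnorm {R : pzRingType} (v : 'cV[R]_3) : R := \sum_(i < 3) v i 0 ^+ 2.

From HB Require Import structures.
From mathcomp Require Import all_boot all_order all_algebra.
From mathcomp Require Import ring.
Import Order.TTheory GRing.Theory Num.Theory.
Local Open Scope ring_scope.

(* With Q := v v^T we have [v x][v x]^T = I - Q and [v x]^T Q = 0 for |v| = 1,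
   and Q is idempotent. Hence the innovation covariance S = H P H^T + R is
   (phi + rho) I - phi Q, whose inverse is again a combination of I and Q, and
   [v x]^T S^-1 = (phi + rho)^-1 [v x]^T: the gain only sees the scalar
   phi / (phi + rho) = 1 / (1 + rho / phi). *)

Lemma cV3E (R : pzRingType) (v : 'cV[R]_3) (i : 'I_3) (j : 'I_1) :
  v i j = [:: c0 v; c1 v; c2 v]`_i.
Proof.
rewrite (ord1 j); case: i => [[|[|[|//]]] ?] /=; rewrite /c0 /c1 /c2;
  by congr (v _ 0); apply/val_inj; rewrite /= inordK.
Qed.

Ltac mx3_entries :=
  apply/matrixP; let i := fresh "i" in let j := fresh "j" in move=> i j;
  rewrite !mxE ?(big_ord_recr, big_ord0, mxE) /= ?cV3E /=;
  case: i => [[|[|[|?]]] ?] //=; case: j => [[|[|[|?]]] ?] //=; rewrite ?cV3E /=.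

Section CrossProduct.
Variables (R : comPzRingType) (v : 'cV[R]_3).

Lemma sqnormE : sqnorm v = c0 v ^+ 2 + c1 v ^+ 2 + c2 v ^+ 2.
Proof. by rewrite /sqnorm !big_ord_recr big_ord0 /= !cV3E /= add0r. Qed.

Lemma trmx_mul_sqnorm : v^T *m v = (sqnorm v)%:M.
Proof.
apply/matrixP => i j; rewrite (ord1 i) (ord1 j) !mxE sqnormE.
by rewrite !big_ord_recr big_ord0 /= !mxE !cV3E /=; ring.
Qed.

Lemma crossmx_mul_tr :
  crossmx v *m (crossmx v)^T = sqnorm v *: 1%:M - v *m v^T.
Proof. rewrite sqnormE; mx3_entries; ring. Qed.

Lemma tr_crossmx_mul (w : 'cV[R]_3) : (crossmx v)^T *m w = crossv w v.
Proof. mx3_entries; ring. Qed.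

Lemma tr_crossmx_mul_self : (crossmx v)^T *m v = 0.
Proof. mx3_entries; ring. Qed.

Lemma mulmx_outer_idem : sqnorm v = 1 -> (v *m v^T) *m (v *m v^T) = v *m v^T.
Proof. by move=> hv; rewrite mulmxA -(mulmxA v) trmx_mul_sqnorm hv mulmx1. Qed.

End CrossProduct.

Section ScalarPlusIdempotent.
Variables (F : fieldType) (n : nat) (Q : 'M[F]_n) (a b : F).
Hypotheses (hQ : Q *m Q = Q) (ha : a != 0) (hab : a + b != 0).

Let scalar_idem_inv : 'M[F]_n := a^-1%:M + ((a + b)^-1 - a^-1) *: Q.

Lemma mulmx_scalar_idem_inv : (a%:M + b *: Q) *m scalar_idem_inv = 1%:M.
Proof.
rewrite /scalar_idem_inv mulmxDl !mulmxDr !mul_scalar_mx -!scalemxAl -!scalemxAr hQ.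
rewrite mul_mx_scalar scale_scalar_mx mulfV // !scalerA -addrA -!scalerDl.
by rewrite [X in _ + X *: Q](_ : _ = 0) ?scale0r ?addr0 //; field; rewrite ha hab.
Qed.

Lemma unitmx_scalar_idem : a%:M + b *: Q \in unitmx.
Proof. by case: (mulmx1_unit mulmx_scalar_idem_inv). Qed.

Lemma invmx_scalar_idem :
  invmx (a%:M + b *: Q) = a^-1%:M + ((a + b)^-1 - a^-1) *: Q.
Proof.
rewrite -[LHS]mulmx1 -mulmx_scalar_idem_inv mulmxA mulVmx ?mul1mx //.
exact: unitmx_scalar_idem.
Qed.

End ScalarPlusIdempotent.

Section KalmanBlocks.
Variables (R : comPzRingType) (m n : nat) (X : 'M[R]_(m, n)) (Pbb : 'M[R]_n).
Variables (phi psi : R).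

Let P : 'M[R]_(n + n) := block_mx phi%:M (- psi%:M) (- psi%:M)^T Pbb.
Let H : 'M[R]_(m, n + n) := row_mx X 0.

Lemma kalman_gain_numerator :
  P *m H^T = col_mx (phi *: X^T) (- psi *: X^T).
Proof.
rewrite /P /H tr_row_mx trmx0 mul_block_col !mulmx0 !addr0 raddfN /=.
by rewrite tr_scalar_mx mulNmx !mul_scalar_mx scaleNr.
Qed.

Lemma innovation_covariance : H *m P *m H^T = phi *: (X *m X^T).
Proof.
rewrite -mulmxA kalman_gain_numerator /H mul_row_col mul0mx addr0.
by rewrite -scalemxAr.
Qed.

End KalmanBlocks.

Theorem mainTheorem9 (R : realFieldType) (v : 'cV[R]_3) (phi psi rho : R)
    (Pbb : 'M[R]_3)
    (hv : sqnorm v = 1) (hphi : 0 < phi) (hpsi : 0 < psi) (hrho : 0 < rho) :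
  let P : 'M[R]_(3 + 3) :=
    block_mx (phi%:M) (- psi%:M) (trmx (- psi%:M)) Pbb in
  let Rm : 'M[R]_3 := rho%:M in
  let H : 'M[R]_(3, 3 + 3) := row_mx (crossmx v) 0 in
  let S : 'M[R]_3 := H *m P *m trmx H + Rm in
  let K : 'M[R]_(3 + 3, 3) := P *m trmx H *m invmx S in
  let wa : R := 1 / (1 + rho / phi) in
  let wb : R := psi / phi in
  [/\ S \in unitmx,
      K = wa *: (col_mx (1%:M : 'M[R]_3) (- wb%:M) *m (trmx (crossmx v)))
    & forall xi : 'cV[R]_3,
        K *m (xi - v) = wa *: col_mx (crossv xi v) (- wb *: crossv xi v)].
Proof.
move=> P Rm H S K wa wb; set X := crossmx v; set Q := v *m v^T.
have [p0 r0 pr0] : [/\ phi != 0, rho != 0 & phi + rho != 0].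
  by split; rewrite gt_eqF // addr_gt0.
have SE : S = (phi + rho)%:M + (- phi) *: Q.
  rewrite /S innovation_covariance crossmx_mul_tr hv scale1r scalerBr scaleNr.
  by rewrite scalemx1 addrAC -raddfD /= addrC.
have hQ : Q *m Q = Q by exact: mulmx_outer_idem.
have hSinv : X^T *m invmx S = (phi + rho)^-1 *: X^T.
  rewrite SE invmx_scalar_idem //; last by rewrite addrAC subrr add0r.
  rewrite mulmxDr -scalemxAr mulmxA.
  by rewrite tr_crossmx_mul_self mul0mx scaler0 addr0 mul_mx_scalar.
have KE : K = (phi / (phi + rho)) *: col_mx X^T ((- (psi / phi)) *: X^T).
  rewrite /K kalman_gain_numerator mul_col_mx -!scalemxAl hSinv !scalerA.
  rewrite scale_col_mx scalerA; congr col_mx; congr (_ *: _); field; exact/andP.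
have wae : wa = phi / (phi + rho) by rewrite /wa; field; rewrite pr0 p0.
split.
- by rewrite SE unitmx_scalar_idem // addrAC subrr add0r.
- by rewrite KE wae mul_col_mx mul1mx mulNmx mul_scalar_mx scaleNr.
- move=> xi; rewrite KE wae -scalemxAl mul_col_mx -scalemxAl mulmxBr.
  by rewrite tr_crossmx_mul_self subr0 tr_crossmx_mul /wb.
Qed.
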